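(* Let $\mathbb{F}_2$ be the free group on $a,b$ with word length $\ell$ with respect to $\{a^{\pm1},b^{\pm1}\}$, and let $\alpha(n):=\min\{\ell(w)\mid w\in\gamma_n(\mathbb{F}_2)\setminus\{e\}\}$ and $\alpha:=\lim_{n\to\infty}\frac{\log_2(\alpha(n))}{\log_2(n)}$. There is a constant $C''>0$ such that $\alpha(n)\le C''\cdot n^{\log_\varphi(2)}$ for infinitely many $n\in\mathbb{N}$; consequently $\alpha\le\log_\varphi(2)$, where $\varphi$ is the golden ratio.
   Context: $\gamma_n(\mathbb{F}_2)$ denotes the $n$-th term of the lower central series: $\gamma_1(\mathbb{F}_2)=\mathbb{F}_2$, $\gamma_{n+1}(\mathbb{F}_2)=[\gamma_n(\mathbb{F}_2),\mathbb{F}_2]$. The limit defining $\alpha$ is known to exist. *)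

(* The free group F_2 on a, b is modelled concretely by
   freely reduced words over the alphabet {a, a^-1, b, b^-1}. *)
From Stdlib Require Import Reals List Bool.
Import ListNotations.
Open Scope R_scope.

Inductive gen : Type := ga | gb.

(* a letter: a generator together with an "inverted" flag *)
Definition letter : Type := (gen * bool)%type.

Definition letter_eq_dec (x y : letter) : {x = y} + {x <> y}.
Proof. decide equality; decide equality. Defined.

Definition linv (x : letter) : letter := (fst x, negb (snd x)).

Definition word := list letter.

Definition cons_red (x : letter) (w : word) : word :=
  match w with
  | y :: r => if letter_eq_dec y (linv x) then r else x :: y :: r
  | [] => [x]
  end.

Fixpoint red (w : word) : word :=
  match w with
  | [] => []
  | x :: r => cons_red x (red r)
  end.

Definition reduced (w : word) : Prop := red w = w.

Definition fg_one : word := [].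
Definition fg_mul (u v : word) : word := red (u ++ v).
Definition fg_inv (u : word) : word := rev (map linv u).
Definition fg_comm (x y : word) : word :=
  fg_mul (fg_mul (fg_inv x) (fg_inv y)) (fg_mul x y).

Definition wlen (w : word) : nat := length w.

(* lower central series: gamma 1 = F_2, gamma (n+1) = [gamma n, F_2],
   the subgroup generated by commutators [x, y], x in gamma n, y in F_2.
   (gamma 0 is irrelevant/unused.) *)
Inductive gamma : nat -> word -> Prop :=
| gamma_top : forall w, gamma 1 (red w)
| gamma_comm : forall n x y, gamma (S n) x -> reduced y ->
    gamma (S (S n)) (fg_comm x y)
| gamma_one : forall n, gamma n fg_one
| gamma_mul : forall n x y, gamma n x -> gamma n y -> gamma n (fg_mul x y)
| gamma_inv : forall n x, gamma n x -> gamma n (fg_inv x).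

Definition is_alpha (n m : nat) : Prop :=
  (exists w, gamma n w /\ w <> fg_one /\ wlen w = m) /\
  (forall w, gamma n w -> w <> fg_one -> (m <= wlen w)%nat).

Definition golden_ratio : R := (1 + sqrt 5) / 2.
Definition log2 (x : R) : R := ln x / ln 2.
Definition log_phi (x : R) : R := ln x / ln golden_ratio.

(* The substitution rho : a |-> b^-1 a^-1, b |-> b a is an endomorphism of F_2
   sending reduced words to reduced words of twice the length.  The words
   w_k = rho^k(a^-1) satisfy w_(k+2) = [w_k, w_(k+1)]^g for some g: this holds
   for k = 0 and rho transports it.  As [gamma_i, gamma_j] <= gamma_(i+j) and each
   gamma_n is normal, w_k is a nontrivial element of gamma_(F(k+1)) of length 2^k,
   F the Fibonacci numbers.  Since F(k+2) >= phi^k, this gives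
   alpha(F(k+2)) <= 2^(k+1) <= 2 F(k+2)^(log_phi 2), and this bound along the
   subsequence F(k+2) caps the limit of log alpha(n) / log n by log_phi 2. *)

From Stdlib Require Import Reals List Bool Arith Lia Lra Classical.
Import ListNotations.
Open Scope R_scope.
Local Open Scope nat_scope.

Lemma linv_involutive (x : letter) : linv (linv x) = x.
Proof. destruct x as [g s]; unfold linv; simpl; now rewrite negb_involutive. Qed.

Fixpoint freely_reduced (w : word) : Prop :=
  match w with
  | [] => True
  | x :: r =>
      match r with [] => True | y :: _ => y <> linv x end /\ freely_reduced r
  end.

Lemma freely_reduced_cons_red x w :
  freely_reduced w -> freely_reduced (cons_red x w).
Proof.
  destruct w as [|y r]; simpl; auto.
  destruct (letter_eq_dec y (linv x)); simpl; tauto.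
Qed.

Lemma freely_reduced_red w : freely_reduced (red w).
Proof. induction w; simpl; auto using freely_reduced_cons_red. Qed.

Lemma red_freely_reduced w : freely_reduced w -> red w = w.
Proof.
  induction w as [|x r IH]; simpl; auto.
  intros [Hxr Hr]. rewrite IH by auto.
  destruct r as [|y r']; simpl; auto.
  destruct (letter_eq_dec y (linv x)); [contradiction | reflexivity].
Qed.

Lemma reduced_iff w : reduced w <-> freely_reduced w.
Proof.
  unfold reduced; split; [intros <-; apply freely_reduced_red | apply red_freely_reduced].
Qed.

Lemma red_idempotent w : red (red w) = red w.
Proof. apply red_freely_reduced, freely_reduced_red. Qed.

Lemma cons_red_cancel x w :
  freely_reduced w -> cons_red x (cons_red (linv x) w) = w.
Proof.
  destruct w as [|y r].
  - intros _. unfold cons_red.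
    destruct (letter_eq_dec (linv x) (linv x)); [reflexivity | contradiction].
  - intros [Hyr Hr]. unfold cons_red at 2. rewrite linv_involutive.
    destruct (letter_eq_dec y x) as [->|Hyx]; unfold cons_red.
    + destruct r as [|z r']; [reflexivity|].
      destruct (letter_eq_dec z (linv x)); [contradiction | reflexivity].
    + destruct (letter_eq_dec (linv x) (linv x)); [reflexivity | contradiction].
Qed.

Lemma red_app u v : red (u ++ v) = fold_right cons_red (red v) u.
Proof. induction u; simpl; congruence. Qed.

Lemma red_app_red_r u v : red (u ++ red v) = red (u ++ v).
Proof. rewrite !red_app, red_idempotent; reflexivity. Qed.

Lemma red_cons_red_app x w v :
  red (cons_red x w ++ v) = cons_red x (red (w ++ v)).
Proof.
  destruct w as [|y r]; simpl; auto.
  destruct (letter_eq_dec y (linv x)) as [->|]; simpl; auto.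
  rewrite cons_red_cancel; auto using freely_reduced_red.
Qed.

Lemma red_app_red_l u v : red (red u ++ v) = red (u ++ v).
Proof.
  induction u as [|x u IH]; simpl; auto.
  rewrite red_cons_red_app, IH; reflexivity.
Qed.

Lemma fg_mul_red u v : fg_mul (red u) (red v) = red (u ++ v).
Proof. unfold fg_mul. rewrite red_app_red_l, red_app_red_r. reflexivity. Qed.

Lemma fg_inv_involutive u : fg_inv (fg_inv u) = u.
Proof.
  unfold fg_inv. rewrite map_rev, rev_involutive, map_map.
  induction u; simpl; auto. rewrite linv_involutive; congruence.
Qed.

Lemma fg_inv_app u v : fg_inv (u ++ v) = fg_inv v ++ fg_inv u.
Proof. unfold fg_inv. rewrite map_app, rev_app_distr; reflexivity. Qed.

Lemma red_inv_app_cancel u v : red (fg_inv u ++ u ++ v) = red v.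
Proof.
  revert v; induction u as [|x u IH]; intro v; [reflexivity|].
  change (fg_inv (x :: u)) with (fg_inv u ++ [linv x]).
  rewrite <- app_assoc, <- (IH v), !(red_app (fg_inv u)).
  f_equal. cbn [app red]. rewrite <- (linv_involutive x) at 2.
  apply cons_red_cancel, freely_reduced_red.
Qed.

Lemma red_app_inv_cancel u v : red (u ++ fg_inv u ++ v) = red v.
Proof. rewrite <- (fg_inv_involutive u) at 1. apply red_inv_app_cancel. Qed.

Lemma freely_reduced_snoc w z :
  freely_reduced w -> (forall w' y, w = w' ++ [y] -> z <> linv y) ->
  freely_reduced (w ++ [z]).
Proof.
  induction w as [|x w IH]; simpl; auto.
  intros [Hxw Hw] Hlast. split.
  - destruct w as [|y w']; simpl; auto.
    intros ->. apply (Hlast [] x); auto.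
  - apply IH; auto. intros w' y E. apply (Hlast (x :: w')). simpl; congruence.
Qed.

Lemma freely_reduced_inv w : freely_reduced w -> freely_reduced (fg_inv w).
Proof.
  induction w as [|x w IH]; [intros; exact I|].
  intros [Hxw Hw]. change (fg_inv (x :: w)) with (fg_inv w ++ [linv x]).
  apply freely_reduced_snoc; auto.
  intros w' y E. destruct w as [|y0 w0].
  - destruct w' as [|? [|]]; discriminate.
  - change (fg_inv (y0 :: w0)) with (fg_inv w0 ++ [linv y0]) in E.
    apply app_inj_tail in E as [_ <-].
    intros E. apply Hxw. rewrite linv_involutive in E. auto.
Qed.

Lemma red_fg_inv u : red (fg_inv u) = fg_inv (red u).
Proof.
  assert (E : red (u ++ fg_inv (red u)) = []).
  { rewrite <- red_app_red_l, <- (app_nil_r (fg_inv (red u))).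
    apply red_app_inv_cancel. }
  rewrite <- (red_freely_reduced (fg_inv (red u)))
    by apply freely_reduced_inv, freely_reduced_red.
  rewrite <- (red_inv_app_cancel u (fg_inv (red u))), <- red_app_red_r, E, app_nil_r.
  reflexivity.
Qed.

(** * Identities in free groups by reflection *)

Inductive gexpr : Type :=
| EVar (i : nat)
| EOne
| EMul (e1 e2 : gexpr)
| EInv (e : gexpr)
| EComm (e1 e2 : gexpr).

Fixpoint gexpr_eval (env : nat -> word) (e : gexpr) : word :=
  match e with
  | EVar i => env i
  | EOne => fg_one
  | EMul e1 e2 => fg_mul (gexpr_eval env e1) (gexpr_eval env e2)
  | EInv e => fg_inv (gexpr_eval env e)
  | EComm e1 e2 => fg_comm (gexpr_eval env e1) (gexpr_eval env e2)
  end.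

(* A letter of the free group on the variables of a [gexpr]: a variable index
   and an "inverted" flag. *)
Definition sym : Type := (nat * bool)%type.

Definition sym_eq_dec (x y : sym) : {x = y} + {x <> y}.
Proof. decide equality; decide equality. Defined.

Definition sym_inv (x : sym) : sym := (fst x, negb (snd x)).
Definition syms_inv (l : list sym) : list sym := rev (map sym_inv l).

Definition sym_cons_red (x : sym) (l : list sym) : list sym :=
  match l with
  | y :: r => if sym_eq_dec y (sym_inv x) then r else x :: y :: r
  | [] => [x]
  end.

Fixpoint sym_red (l : list sym) : list sym :=
  match l with [] => [] | x :: r => sym_cons_red x (sym_red r) end.

Fixpoint gexpr_syms (e : gexpr) : list sym :=
  match e with
  | EVar i => [(i, false)]
  | EOne => []
  | EMul e1 e2 => gexpr_syms e1 ++ gexpr_syms e2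
  | EInv e => syms_inv (gexpr_syms e)
  | EComm e1 e2 =>
      syms_inv (gexpr_syms e1) ++ syms_inv (gexpr_syms e2)
        ++ gexpr_syms e1 ++ gexpr_syms e2
  end.

Definition sym_eval (env : nat -> word) (x : sym) : word :=
  if snd x then fg_inv (env (fst x)) else env (fst x).

Definition syms_eval (env : nat -> word) (l : list sym) : word :=
  concat (map (sym_eval env) l).

Lemma syms_eval_app env l1 l2 :
  syms_eval env (l1 ++ l2) = syms_eval env l1 ++ syms_eval env l2.
Proof. unfold syms_eval. rewrite map_app, concat_app. reflexivity. Qed.

Lemma sym_eval_inv env x : sym_eval env (sym_inv x) = fg_inv (sym_eval env x).
Proof.
  destruct x as [i [|]]; unfold sym_eval, sym_inv; simpl;
    rewrite ?fg_inv_involutive; reflexivity.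
Qed.

Lemma syms_eval_inv env l : syms_eval env (syms_inv l) = fg_inv (syms_eval env l).
Proof.
  induction l as [|x l IH]; [reflexivity|].
  change (syms_inv (x :: l)) with (syms_inv l ++ [sym_inv x]).
  change (syms_eval env (x :: l)) with (sym_eval env x ++ syms_eval env l).
  rewrite syms_eval_app, IH, fg_inv_app, <- sym_eval_inv.
  unfold syms_eval at 2; simpl. rewrite app_nil_r. reflexivity.
Qed.

Lemma gexpr_eval_red env e :
  (forall i, freely_reduced (env i)) ->
  gexpr_eval env e = red (syms_eval env (gexpr_syms e)).
Proof.
  intros Henv. induction e; simpl.
  - unfold syms_eval, sym_eval; simpl. rewrite app_nil_r.
    symmetry; apply red_freely_reduced; auto.
  - reflexivity.
  - rewrite IHe1, IHe2, syms_eval_app, fg_mul_red. reflexivity.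
  - rewrite IHe, syms_eval_inv, red_fg_inv. reflexivity.
  - unfold fg_comm.
    rewrite IHe1, IHe2, <- !red_fg_inv, !fg_mul_red, !syms_eval_app, !syms_eval_inv,
      !app_assoc.
    reflexivity.
Qed.

Lemma red_syms_eval_cons_red env x l :
  red (syms_eval env (sym_cons_red x l)) = red (sym_eval env x ++ syms_eval env l).
Proof.
  destruct l as [|y r]; [reflexivity|]. simpl.
  destruct (sym_eq_dec y (sym_inv x)) as [->|]; [|reflexivity].
  change (syms_eval env (sym_inv x :: r))
    with (sym_eval env (sym_inv x) ++ syms_eval env r).
  rewrite sym_eval_inv, red_app_inv_cancel. reflexivity.
Qed.

Lemma red_syms_eval_red env l : red (syms_eval env (sym_red l)) = red (syms_eval env l).
Proof.
  induction l as [|x l IH]; [reflexivity|]. simpl.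
  rewrite red_syms_eval_cons_red, <- red_app_red_r, IH, red_app_red_r. reflexivity.
Qed.

(* Proof by reflection: the formal words of both sides are freely reduced and
   compared by computation. *)
Lemma free_group_identity (ws : list word) (e1 e2 : gexpr) :
  Forall freely_reduced ws ->
  sym_red (gexpr_syms e1) = sym_red (gexpr_syms e2) ->
  gexpr_eval (fun i => nth i ws []) e1 = gexpr_eval (fun i => nth i ws []) e2.
Proof.
  intros Hws E.
  assert (Henv : forall i, freely_reduced (nth i ws [])).
  { intro i. revert i. induction Hws; intros [|i]; simpl; auto; exact I. }
  rewrite !gexpr_eval_red by exact Henv.
  rewrite <- (red_syms_eval_red _ (gexpr_syms e1)), E, red_syms_eval_red.
  reflexivity.
Qed.

Ltac free_group_identity ws e1 e2 :=
  exact (free_group_identity ws e1 e2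
           ltac:(repeat constructor; assumption) ltac:(vm_compute; reflexivity)).

Definition fg_conj (g w : word) : word := fg_mul (fg_mul (fg_inv g) w) g.

Section CommutatorIdentities.

Variables x y z : word.
Hypotheses (Hx : freely_reduced x) (Hy : freely_reduced y) (Hz : freely_reduced z).

Lemma fg_conj_eq_mul_comm : fg_conj y x = fg_mul x (fg_comm x y).
Proof.
  free_group_identity [x; y]
    (EMul (EMul (EInv (EVar 1)) (EVar 0)) (EVar 1)) (EMul (EVar 0) (EComm (EVar 0) (EVar 1))).
Qed.

Lemma fg_comm_one_r : fg_comm x fg_one = fg_one.
Proof. free_group_identity [x] (EComm (EVar 0) EOne) EOne. Qed.

Lemma fg_comm_sym : fg_comm y x = fg_inv (fg_comm x y).
Proof. free_group_identity [x; y] (EComm (EVar 1) (EVar 0)) (EInv (EComm (EVar 0) (EVar 1))). Qed.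

Lemma fg_comm_mul_r : fg_comm x (fg_mul y z) = fg_mul (fg_comm x z) (fg_conj z (fg_comm x y)).
Proof.
  free_group_identity [x; y; z]
    (EComm (EVar 0) (EMul (EVar 1) (EVar 2)))
    (EMul (EComm (EVar 0) (EVar 2)) (EMul (EMul (EInv (EVar 2)) (EComm (EVar 0) (EVar 1))) (EVar 2))).
Qed.

Lemma fg_comm_inv_r : fg_comm x (fg_inv y) = fg_conj (fg_inv y) (fg_inv (fg_comm x y)).
Proof.
  free_group_identity [x; y]
    (EComm (EVar 0) (EInv (EVar 1)))
    (EMul (EMul (EInv (EInv (EVar 1))) (EInv (EComm (EVar 0) (EVar 1)))) (EInv (EVar 1))).
Qed.

(* A form of the Hall-Witt identity. *)
Lemma fg_comm_comm_r :
  fg_comm x (fg_comm y z) =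
  fg_conj z (fg_mul (fg_conj x (fg_comm (fg_comm (fg_inv z) (fg_inv x)) y))
                    (fg_conj y (fg_comm (fg_comm x (fg_inv y)) (fg_inv z)))).
Proof.
  free_group_identity [x; y; z]
    (EComm (EVar 0) (EComm (EVar 1) (EVar 2)))
    (EMul (EMul (EInv (EVar 2))
      (EMul (EMul (EMul (EInv (EVar 0)) (EComm (EComm (EInv (EVar 2)) (EInv (EVar 0))) (EVar 1))) (EVar 0))
            (EMul (EMul (EInv (EVar 1)) (EComm (EComm (EVar 0) (EInv (EVar 1))) (EInv (EVar 2)))) (EVar 1))))
      (EVar 2)).
Qed.

End CommutatorIdentities.

(** * The lower central series *)

Lemma gamma_freely_reduced n w : gamma n w -> freely_reduced w.
Proof.
  induction 1; try apply freely_reduced_red; auto using freely_reduced_inv.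
  exact I.
Qed.

Lemma gamma_1_intro w : freely_reduced w -> gamma 1 w.
Proof. intro Hw. rewrite <- (red_freely_reduced w Hw). apply gamma_top. Qed.

Lemma gamma_succ_incl n w : gamma (S (S n)) w -> gamma (S n) w.
Proof.
  remember (S (S n)) as m eqn:Em. intro Hw. revert n Em.
  induction Hw as [w|k x y _ IHx Hy|k|k x y _ IHx _ IHy|k x _ IHx]; intros n Em;
    try discriminate; eauto using gamma_one, gamma_mul, gamma_inv.
  injection Em as ->. destruct n as [|n].
  - apply gamma_1_intro, freely_reduced_red.
  - apply gamma_comm; auto.
Qed.

Lemma gamma_conj n x g :
  1 <= n -> gamma n x -> freely_reduced g -> gamma n (fg_conj g x).
Proof.
  intros Hn Hx Hg. destruct n as [|n]; [lia|].
  rewrite fg_conj_eq_mul_comm by eauto using gamma_freely_reduced.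
  apply gamma_mul, gamma_succ_incl, gamma_comm; auto.
  apply reduced_iff; auto.
Qed.

Section CommutatorDegree.

Variable j : nat.
Hypothesis IHj : forall i x y, 1 <= i -> gamma i x -> gamma (S j) y ->
  gamma (i + S j) (fg_comm x y).

Lemma gamma_comm_comm i x y z :
  1 <= i -> gamma i x -> gamma (S j) y -> freely_reduced z ->
  gamma (i + S (S j)) (fg_comm x (fg_comm y z)).
Proof.
  intros Hi Hx Hy Hz. destruct i as [|i]; [lia|].
  assert (Rx : freely_reduced x) by eauto using gamma_freely_reduced.
  assert (Ry : freely_reduced y) by eauto using gamma_freely_reduced.
  rewrite fg_comm_comm_r by auto.
  apply gamma_conj; [lia| |auto].
  apply gamma_mul; apply gamma_conj; auto; try lia.
  - replace (S i + S (S j)) with (S (S i) + S j) by lia.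
    apply IHj; [lia| |exact Hy].
    rewrite fg_comm_sym by auto using freely_reduced_inv.
    apply gamma_inv, gamma_comm; auto using gamma_inv.
    apply reduced_iff, freely_reduced_inv; auto.
  - replace (S i + S (S j)) with (S (S (i + S j))) by lia.
    apply gamma_comm; [|apply reduced_iff, freely_reduced_inv; auto].
    apply (IHj (S i)); auto using gamma_inv; lia.
Qed.

End CommutatorDegree.

Lemma gamma_comm_add i j x y :
  1 <= i -> 1 <= j -> gamma i x -> gamma j y -> gamma (i + j) (fg_comm x y).
Proof.
  revert i x y; induction j as [|j IHj]; intros i x y Hi Hj Hx Hy; [lia|].
  destruct i as [|i]; [lia|].
  assert (Rx : freely_reduced x) by eauto using gamma_freely_reduced.
  destruct j as [|j].
  - rewrite Nat.add_1_r. apply gamma_comm; auto.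
    apply reduced_iff; eauto using gamma_freely_reduced.
  - remember (S (S j)) as m eqn:Em. revert Em.
    induction Hy as [y|k y z Hy _ Hz|k|k y z Hy IHy Hz IHz|k y Hy IHy]; intro Em;
      try discriminate.
    + injection Em as ->. apply gamma_comm_comm; auto; [intros; apply IHj; auto; lia|].
      apply reduced_iff; auto.
    + rewrite fg_comm_one_r by auto. apply gamma_one.
    + subst k. rewrite fg_comm_mul_r by eauto using gamma_freely_reduced.
      apply gamma_mul; auto.
      apply gamma_conj; eauto using gamma_freely_reduced; lia.
    + subst k. rewrite fg_comm_inv_r by eauto using gamma_freely_reduced.
      apply gamma_conj; [lia | apply gamma_inv; auto |].
      apply freely_reduced_inv; eauto using gamma_freely_reduced.
Qed.

(** * The substitution rho and the Fibonacci words *)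

Definition rho_letter (x : letter) : word :=
  match x with
  | (ga, false) => [(gb, true); (ga, true)]
  | (ga, true) => [(ga, false); (gb, false)]
  | (gb, false) => [(gb, false); (ga, false)]
  | (gb, true) => [(ga, true); (gb, true)]
  end.

Definition rho (w : word) : word := concat (map rho_letter w).

Lemma rho_app u v : rho (u ++ v) = rho u ++ rho v.
Proof. unfold rho. rewrite map_app, concat_app. reflexivity. Qed.

Lemma rho_letter_linv x : rho_letter (linv x) = fg_inv (rho_letter x).
Proof. destruct x as [[|] [|]]; reflexivity. Qed.

Lemma rho_fg_inv u : rho (fg_inv u) = fg_inv (rho u).
Proof.
  induction u as [|x u IH]; [reflexivity|].
  change (fg_inv (x :: u)) with (fg_inv u ++ [linv x]).
  change (rho (x :: u)) with (rho_letter x ++ rho u).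
  rewrite rho_app, IH, fg_inv_app, <- rho_letter_linv.
  unfold rho at 2; simpl. rewrite app_nil_r. reflexivity.
Qed.

Lemma red_rho_red w : red (rho (red w)) = red (rho w).
Proof.
  induction w as [|x w IH]; [reflexivity|].
  change (rho (x :: w)) with (rho_letter x ++ rho w).
  rewrite <- red_app_red_r, <- IH, red_app_red_r. simpl.
  destruct (red w) as [|y r]; [reflexivity|]. unfold cons_red.
  destruct (letter_eq_dec y (linv x)) as [->|]; [|reflexivity].
  change (rho (linv x :: r)) with (rho_letter (linv x) ++ rho r).
  rewrite rho_letter_linv, red_app_inv_cancel. reflexivity.
Qed.

Lemma freely_reduced_rho w : freely_reduced w -> freely_reduced (rho w).
Proof.
  induction w as [|x w IH]; [intros; exact I|].
  intros [Hxw Hw]. specialize (IH Hw).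
  change (rho (x :: w)) with (rho_letter x ++ rho w).
  destruct w as [|y w].
  - destruct x as [[|] [|]]; simpl; repeat split; discriminate.
  - change (rho (y :: w)) with (rho_letter y ++ rho w) in *.
    destruct x as [[|] [|]], y as [[|] [|]]; cbn [rho_letter app] in *;
      try (exfalso; apply Hxw; reflexivity);
      repeat split; try (unfold linv; simpl; discriminate);
      apply IH.
Qed.

Lemma length_rho w : length (rho w) = 2 * length w.
Proof.
  induction w as [|x w IH]; [reflexivity|].
  change (rho (x :: w)) with (rho_letter x ++ rho w).
  rewrite length_app, IH. destruct x as [[|] [|]]; simpl; lia.
Qed.

Lemma rho_fg_mul u v : rho (fg_mul u v) = fg_mul (rho u) (rho v).
Proof.
  unfold fg_mul.
  rewrite <- (red_freely_reduced (rho (red (u ++ v))))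
    by apply freely_reduced_rho, freely_reduced_red.
  rewrite red_rho_red, rho_app. reflexivity.
Qed.

Lemma rho_fg_comm u v : rho (fg_comm u v) = fg_comm (rho u) (rho v).
Proof. unfold fg_comm. rewrite !rho_fg_mul, !rho_fg_inv. reflexivity. Qed.

Lemma rho_fg_conj g w : rho (fg_conj g w) = fg_conj (rho g) (rho w).
Proof. unfold fg_conj. rewrite !rho_fg_mul, rho_fg_inv. reflexivity. Qed.

Definition fib_word (k : nat) : word := Nat.iter k rho [(ga, true)].

Lemma fib_word_S k : fib_word (S k) = rho (fib_word k).
Proof. reflexivity. Qed.

Lemma freely_reduced_fib_word k : freely_reduced (fib_word k).
Proof.
  induction k; [split; exact I|].
  rewrite fib_word_S. apply freely_reduced_rho; auto.
Qed.

Lemma length_fib_word k : length (fib_word k) = 2 ^ k.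
Proof. induction k; [reflexivity|]. rewrite fib_word_S, length_rho, IHk. simpl. lia. Qed.

(* The base case [b^-1 a^-1 b a = a^-1 [a^-1, a b] a] is transported by [rho]. *)
Lemma fib_word_SS_conj k : exists g, freely_reduced g /\
  fib_word (S (S k)) = fg_conj g (fg_comm (fib_word k) (fib_word (S k))).
Proof.
  induction k as [|k [g [Hg E]]].
  - exists [(ga, false)]. split; [split; exact I | vm_compute; reflexivity].
  - exists (rho g). split; [apply freely_reduced_rho; auto|].
    change (fib_word (S (S (S k)))) with (rho (fib_word (S (S k)))).
    rewrite E at 1. rewrite rho_fg_conj, rho_fg_comm. reflexivity.
Qed.

Fixpoint fib (n : nat) : nat :=
  match n with
  | 0 => 0
  | S m => match m with 0 => 1 | S p => fib m + fib p end
  end.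

Lemma fib_SS n : fib (S (S n)) = fib (S n) + fib n.
Proof. reflexivity. Qed.

Lemma fib_S_pos n : 1 <= fib (S n).
Proof. induction n as [|n IH]; [simpl; lia|]. rewrite fib_SS. lia. Qed.

Lemma fib_SS_ge n : n + 1 <= fib (S (S n)).
Proof.
  induction n as [|n IH]; [simpl; lia|].
  rewrite fib_SS. pose proof (fib_S_pos n). lia.
Qed.

Lemma gamma_fib_word k : gamma (fib (S k)) (fib_word k).
Proof.
  enough (H : gamma (fib (S k)) (fib_word k) /\ gamma (fib (S (S k))) (fib_word (S k)))
    by apply H.
  induction k as [|k [IH1 IH2]].
  - split; apply gamma_1_intro, freely_reduced_fib_word.
  - split; [exact IH2|].
    destruct (fib_word_SS_conj k) as [g [Hg ->]].
    rewrite fib_SS, Nat.add_comm.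
    pose proof (fib_S_pos k). pose proof (fib_S_pos (S k)).
    apply gamma_conj; auto; [lia|].
    apply gamma_comm_add; auto.
Qed.

Lemma is_alpha_exists_le n w :
  gamma n w -> w <> fg_one -> exists m, is_alpha n m /\ m <= wlen w.
Proof.
  remember (wlen w) as L eqn:EL. revert w EL.
  induction L as [L IH] using (well_founded_induction lt_wf). intros w EL Hw Hne.
  destruct (classic (exists w', gamma n w' /\ w' <> fg_one /\ wlen w' < L))
    as [[w' (Hw' & Hne' & Hlt)] | Hmin].
  - destruct (IH (wlen w') Hlt w' eq_refl Hw' Hne') as [m [Hm Hle]].
    exists m; split; [auto | lia].
  - exists L; split; [|lia]. split; [exists w; auto|].
    intros w' Hw' Hne'. apply Nat.nlt_ge. intro Hlt. apply Hmin. exists w'; auto.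
Qed.

Lemma is_alpha_unique n m1 m2 : is_alpha n m1 -> is_alpha n m2 -> m1 = m2.
Proof.
  intros [[w1 (G1 & N1 & L1)] H1] [[w2 (G2 & N2 & L2)] H2].
  specialize (H1 w2 G2 N2). specialize (H2 w1 G1 N1). lia.
Qed.

Lemma is_alpha_pos n m : is_alpha n m -> 1 <= m.
Proof. intros [[[|x w] (_ & Hne & <-)] _]; [contradiction | simpl; lia]. Qed.

Lemma alpha_fib_le k : exists m, is_alpha (fib (S (S k))) m /\ m <= 2 ^ S k.
Proof.
  rewrite <- length_fib_word. apply is_alpha_exists_le; [apply gamma_fib_word|].
  intro E. pose proof (length_fib_word (S k)) as L. rewrite E in L.
  simpl in L. pose proof (Nat.pow_nonzero 2 k). lia.
Qed.

Local Open Scope R_scope.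

Lemma ln_le x y : 0 < x -> x <= y -> ln x <= ln y.
Proof. intros Hx [Hlt | ->]; [left; apply ln_increasing |]; lra. Qed.

Lemma ln_pos x : 1 < x -> 0 < ln x.
Proof. intro Hx. rewrite <- ln_1. apply ln_increasing; lra. Qed.

Lemma golden_ratio_bounds : 1 < golden_ratio < 2.
Proof.
  unfold golden_ratio. assert (1 < sqrt 5 < 3); [|lra].
  rewrite <- sqrt_1, <- (sqrt_square 3) by lra.
  split; apply sqrt_lt_1; lra.
Qed.

Lemma golden_ratio_sq : golden_ratio * golden_ratio = golden_ratio + 1.
Proof. unfold golden_ratio. pose proof (sqrt_sqrt 5 ltac:(lra)). nra. Qed.

Lemma golden_ratio_pow_le_fib k : golden_ratio ^ k <= INR (fib (S (S k))).
Proof.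
  enough (H : golden_ratio ^ k <= INR (fib (S (S k))) /\
              golden_ratio ^ S k <= INR (fib (S (S (S k))))) by apply H.
  pose proof golden_ratio_bounds as Hphi.
  induction k as [|k [IH1 IH2]].
  - simpl. lra.
  - split; [exact IH2|].
    assert (E : golden_ratio ^ S (S k) = golden_ratio ^ S k + golden_ratio ^ k).
    { replace (golden_ratio ^ S (S k)) with (golden_ratio ^ k * (golden_ratio * golden_ratio))
        by (simpl; ring).
      rewrite golden_ratio_sq. simpl. ring. }
    rewrite E, fib_SS, plus_INR. lra.
Qed.

(* [2 ^ k = (golden_ratio ^ k) ^ log_phi 2 <= fib (k + 2) ^ log_phi 2]. *)
Lemma pow2_le_Rpower_fib k :
  INR (2 ^ S k) <= 2 * Rpower (INR (fib (S (S k)))) (log_phi 2).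
Proof.
  pose proof golden_ratio_bounds as Hphi.
  assert (Hlnphi : 0 < ln golden_ratio) by (apply ln_pos; lra).
  assert (E : Rpower (golden_ratio ^ k) (log_phi 2) = 2 ^ k).
  { rewrite <- Rpower_pow, Rpower_mult by lra. unfold Rpower, log_phi.
    replace (INR k * (ln 2 / ln golden_ratio) * ln golden_ratio) with (INR k * ln 2)
      by (field; lra).
    fold (Rpower 2 (INR k)). apply Rpower_pow. lra. }
  rewrite pow_INR. replace (INR 2) with 2 by (simpl; lra).
  change (2 ^ S k) with (2 * 2 ^ k). rewrite <- E. apply Rmult_le_compat_l; [lra|].
  apply Rle_Rpower_l.
  - unfold log_phi. left. apply Rdiv_lt_0_compat; auto. apply ln_pos. lra.
  - split; [apply pow_lt; lra | apply golden_ratio_pow_le_fib].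
Qed.

Lemma alpha_frequently_le :
  exists C : R, 0 < C /\
    forall N : nat, exists n : nat, (N <= n)%nat /\ (1 <= n)%nat /\
      exists m : nat, is_alpha n m /\ INR m <= C * Rpower (INR n) (log_phi 2).
Proof.
  exists 2. split; [lra|]. intro N.
  exists (fib (S (S N))).
  pose proof (fib_SS_ge N).
  split; [lia|]. split; [lia|].
  destruct (alpha_fib_le N) as [m [Hm Hle]].
  exists m. split; [exact Hm|].
  eapply Rle_trans; [apply le_INR, Hle | apply pow2_le_Rpower_fib].
Qed.

Lemma log2_ratio_le (m n C c : R) :
  0 < C -> 0 < m -> 1 < n -> m <= C * Rpower n c ->
  log2 m / log2 n <= c + ln C / ln n.
Proof.
  intros HC Hm Hn Hb.
  assert (Hlnn : 0 < ln n) by (apply ln_pos; auto).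
  assert (Hln2 : 0 < ln 2) by (apply ln_pos; lra).
  assert (Hln : ln m <= ln C + c * ln n).
  { rewrite <- ln_Rpower, <- ln_mult by (auto; apply exp_pos). apply ln_le; auto. }
  unfold log2. replace (ln m / ln 2 / (ln n / ln 2)) with (ln m / ln n)
    by (field; split; lra).
  replace (c + ln C / ln n) with ((ln C + c * ln n) / ln n) by (field; lra).
  unfold Rdiv. apply Rmult_le_compat_r; [left; apply Rinv_0_lt_compat |]; auto.
Qed.

Lemma Un_cv_le_of_frequently_le (u : nat -> R) (L c : R) :
  Un_cv u L -> (forall eps N, 0 < eps -> exists n, (N <= n)%nat /\ u n <= c + eps) ->
  L <= c.
Proof.
  intros Hcv Hfreq. apply Rnot_lt_le. intro Hlt.
  destruct (Hcv ((L - c) / 2) ltac:(lra)) as [N HN].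
  destruct (Hfreq ((L - c) / 2) N ltac:(lra)) as [n [Hn Hun]].
  specialize (HN n Hn). unfold Rdist in HN. apply Rabs_def2 in HN. lra.
Qed.

(* The slack [ln C / ln n] of [log2_ratio_le] vanishes as [n] grows. *)
Lemma log2_ratio_limit_le (a : nat -> nat) (L C c : R) :
  0 < C ->
  (forall N, exists n, (N <= n)%nat /\ (1 <= a n)%nat /\ INR (a n) <= C * Rpower (INR n) c) ->
  Un_cv (fun n => log2 (INR (a n)) / log2 (INR n)) L -> L <= c.
Proof.
  intros HC Hfreq Hcv. apply (Un_cv_le_of_frequently_le _ _ _ Hcv).
  intros eps N Heps.
  destruct (INR_unbounded (exp (ln C / eps))) as [N0 HN0].
  destruct (Hfreq (max N (max N0 2))) as [n (Hn & Ha & Hb)].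
  exists n. split; [lia|].
  assert (Hn2 : 2 <= INR n) by (replace 2 with (INR 2) by (simpl; lra); apply le_INR; lia).
  assert (HnN0 : INR N0 <= INR n) by (apply le_INR; lia).
  assert (Hlnn : 0 < ln (INR n)) by (apply ln_pos; lra).
  assert (Hslack : ln C / ln (INR n) < eps).
  { assert (H : ln C / eps < ln (INR n)).
    { rewrite <- (ln_exp (ln C / eps)). apply ln_increasing; [apply exp_pos | lra]. }
    apply (Rmult_lt_reg_r (ln (INR n))); auto.
    unfold Rdiv. rewrite Rmult_assoc, Rinv_l, Rmult_1_r by lra.
    apply (Rmult_lt_reg_r (/ eps)); [apply Rinv_0_lt_compat; auto|].
    replace (eps * ln (INR n) * / eps) with (ln (INR n)) by (field; lra). exact H. }
  apply Rle_trans with (c + ln C / ln (INR n)).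
  - apply log2_ratio_le; auto; [apply lt_0_INR; lia | lra].
  - lra.
Qed.

Theorem proposition2p6 :
  (exists C : R, 0 < C /\
     forall N : nat, exists n : nat, (N <= n)%nat /\ (1 <= n)%nat /\
       exists m : nat, is_alpha n m /\
         INR m <= C * Rpower (INR n) (log_phi 2))
  /\
  (forall (alpha_ : nat -> nat) (alpha_lim : R),
     (forall n, (1 <= n)%nat -> is_alpha n (alpha_ n)) ->
     Un_cv (fun n => log2 (INR (alpha_ n)) / log2 (INR n)) alpha_lim ->
     alpha_lim <= log_phi 2).
Proof.
  split; [exact alpha_frequently_le|].
  intros alpha_ L Halpha Hcv.
  destruct alpha_frequently_le as [C [HC Hfreq]].
  apply (log2_ratio_limit_le alpha_ L C); auto.
  intro N. destruct (Hfreq N) as [n (HNn & Hn & m & Hm & Hb)].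
  rewrite <- (is_alpha_unique n (alpha_ n) m (Halpha n Hn) Hm) in Hb.
  exists n. split; [|split]; eauto using is_alpha_pos.
Qed.
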